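(* Let $m$ be an integer and $n>0$ an integer. (1) The ordered root quadruples $\mathbf v=(w,x,y,z)$, $w\le x\le y\le z$, with $L(\mathbf v)>0$, $Q_{\mathcal D}(\mathbf v)=4m$ and smallest element $w=-n$ are in one-to-one correspondence with the integral binary quadratic forms $[A,B,C]=AX^2+2BXY+CY^2$ (primitive or imprimitive) of discriminant $\Delta=4B^2-4AC=-4n^2+4m$ satisfying $0\le 2B\le A\le C$; the correspondence is given by $$[A,B,C]=\left[-n+x,\ \tfrac12(-n+x+y-z),\ -n+y\right].$$ (2) If $\Delta=-4n^2+4m<0$, then $N_{\mathrm{root}}(4m;-n)=\widetilde{h^{\pm}}(-4(n^2-m))$.
   Context: $Q_{\mathcal D}(a,b,c,d)=2(a^2+b^2+c^2+d^2)-(a+b+c+d)^2$; $L(\mathbf v)=a+b+c+d$; $|\mathbf v|=|a|+|b|+|c|+|d|$. $\mathbf S_i$ ($i=1,\dots,4$) is the integer matrix replacing the $i$-th coordinate $a_i$ of a quadruple by $2\sum_{j\ne i}a_j-a_i$, other coordinates fixed. An integer quadruple is reduced if no $\mathbf S_i$ strictly decreases $|\cdot|$; a reduced quadruple ordered as $a\le b\le c\le d$ with $L\ge0$ is a root quadruple if $a+b+c\ge d>0$. $N_{\mathrm{root}}(k;-n)$ is the number of integer root quadruples $(w,x,y,z)$ with $Q_{\mathcal D}=k$, $w+x+y+z>0$ and smallest element $w=-n$. For a discriminant $\Delta<0$, $\widetilde{h^{\pm}}(\Delta)$ is the number of integral binary quadratic forms $[A,B,C]=AT^2+2BTU+CU^2$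 (primitive or imprimitive) with $4B^2-4AC=\Delta$ and $0\le2B\le A\le C$ (the $GL(2,\mathbb Z)$-reduced forms; equivalently the number of $GL(2,\mathbb Z)$-equivalence classes of positive definite forms of discriminant $\Delta$). *)

From mathcomp Require Import all_boot all_order all_algebra.
Set Implicit Arguments. Unset Strict Implicit. Unset Printing Implicit Defensive.
Import Order.TTheory GRing.Theory Num.Theory.
Local Open Scope ring_scope.

Definition quad := (int * int * int * int)%type.

Definition QD (v : quad) : int :=
  let: (a, b, c, d) := v in
  2 * (a ^+ 2 + b ^+ 2 + c ^+ 2 + d ^+ 2) - (a + b + c + d) ^+ 2.

Definition Lq (v : quad) : int := let: (a, b, c, d) := v in a + b + c + d.

Definition absq (v : quad) : int :=
  let: (a, b, c, d) := v in `|a| + `|b| + `|c| + `|d|.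

(* S_i (i = 1..4, here indexed by i : 'I_4 = 0..3): replace the i-th
   coordinate a_i by 2 * (sum of the other coordinates) - a_i. *)
Definition Sop (i : 'I_4) (v : quad) : quad :=
  let: (a, b, c, d) := v in
  match val i with
  | 0%N => (2 * (b + c + d) - a, b, c, d)
  | 1%N => (a, 2 * (a + c + d) - b, c, d)
  | 2%N => (a, b, 2 * (a + b + d) - c, d)
  | _ => (a, b, c, 2 * (a + b + c) - d)
  end.

Definition reduced (v : quad) : Prop :=
  forall i : 'I_4, ~ (absq (Sop i v) < absq v).

Definition root_quad (v : quad) : Prop :=
  let: (a, b, c, d) := v in
  [/\ reduced v, a <= b <= c, c <= d, 0 <= Lq v & d <= a + b + c /\ 0 < d].

Definition root_set (k n : int) (v : quad) : Prop :=
  let: (w, x, y, z) := v in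
  [/\ root_quad v, 0 < Lq v, QD v = k & w = - n].

(* Binary forms [A,B,C] = A T^2 + 2 B T U + C U^2. *)
Definition bform := (int * int * int)%type.

Definition disc (f : bform) : int :=
  let: (A, B, C) := f in 4 * B ^+ 2 - 4 * A * C.

(* GL(2,Z)-reduced forms of discriminant D: 0 <= 2B <= A <= C. *)
Definition reduced_form_set (D : int) (f : bform) : Prop :=
  let: (A, B, C) := f in [/\ disc f = D, 0 <= 2 * B, 2 * B <= A & A <= C].

Definition corr (n : int) (v : quad) (f : bform) : Prop :=
  let: (w, x, y, z) := v in
  let: (A, B, C) := f in
  [/\ A = - n + x, 2 * B = - n + x + y - z & C = - n + y].

Definition has_card (T : eqType) (P : T -> Prop) (N : nat) : Prop :=
  exists s : seq T, [/\ uniq s, forall x, x \in s <-> P x & size s = N].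

Definition Nroot_is (k n : int) (N : nat) : Prop := has_card (root_set k n) N.

Definition htilde_is (D : int) (N : nat) : Prop := has_card (reduced_form_set D) N.

From mathcomp Require Import all_boot all_order all_algebra zify ring.
Set Implicit Arguments. Unset Strict Implicit. Unset Printing Implicit Defensive.
Import Order.TTheory GRing.Theory Num.Theory.
Local Open Scope ring_scope.

(* With w = -n, the substitution A = x + w, C = y + w, 2B = w + x + y - z turns
   Q_D(w,x,y,z) into 4B^2 - 4AC + 4n^2, so Q_D = 4m is exactly disc [A,B,C] = 4m - 4n^2,
   and the evenness of w + x + y - z is forced by that equation. The root conditions
   on (w,x,y,z) translate into 0 <= 2B <= A <= C, and conversely every such form gives
   back a quadruple that no S_i shrinks. Counting then reduces to the finiteness of the
   reduced forms of a negative discriminant, all of which lie in the box [0, -D]^3. *)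

Section Cardinality.

Variables T U : eqType.

Lemma has_card_filter_undup (P : T -> Prop) (p : pred T) (s : seq T) :
  (forall x, reflect (P x) (p x)) -> {subset p <= s} ->
  has_card P (size (filter p (undup s))).
Proof.
move=> pP ps; exists (filter p (undup s)); split => //.
  by rewrite filter_uniq ?undup_uniq.
move=> x; rewrite mem_filter mem_undup; split; first by case/andP => /pP.
by move=> /pP px; rewrite px ps.
Qed.

Lemma has_card_image (P : T -> Prop) (Q : U -> Prop) (f : T -> U) (N : nat) :
  injective f -> (forall y, Q y <-> exists2 x, P x & y = f x) ->
  has_card P N -> has_card Q N.
Proof.
move=> f_inj QP [s [s_uniq sP <-]]; exists (map f s); split.
- by rewrite map_inj_uniq.
- move=> y; rewrite QP; split.
    by case/mapP => x /sP Px ->; exists x.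
  by case=> x /sP sx ->; apply: map_f.
- by rewrite size_map.
Qed.

End Cardinality.

Definition quad_of_form (n : int) (f : bform) : quad :=
  let: (A, B, C) := f in (- n, A + n, C + n, A + C + n - 2 * B).

Lemma QD_reduce (w x y z : int) :
  QD (w, x, y, z) = (w + x + y - z) ^+ 2 - 4 * (x + w) * (y + w) + 4 * w ^+ 2.
Proof. rewrite /QD; ring. Qed.

Lemma sqr_eq_mul4_even (s k : int) : s ^+ 2 = 4 * k -> exists b, s = 2 * b.
Proof.
move=> sk; exists (s %/ 2)%Z.
have s_divmod := divz_eq s 2.
have r_ge0 := modz_ge0 s (isT : 2 != 0 :> int).
have r_lt2 := ltz_pmod s (isT : 0 < 2 :> int).
move: sk s_divmod r_ge0 r_lt2; set q := (s %/ 2)%Z; set r := (s %% 2)%Z.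
nia.
Qed.

Lemma corr_quad_of_form (n : int) (f : bform) : corr n (quad_of_form n f) f.
Proof. by case: f => [[A B] C]; split; lia. Qed.

Lemma corr_form_uniq (n : int) (v : quad) (f f' : bform) :
  corr n v f -> corr n v f' -> f = f'.
Proof.
case: v f f' => [[[w x] y] z] [[A B] C] [[A' B'] C'] [eA eB eC] [eA' eB' eC'].
congr (_, _, _); lia.
Qed.

Lemma corr_quad_uniq (n w x y z : int) (f : bform) :
  w = - n -> corr n (w, x, y, z) f -> (w, x, y, z) = quad_of_form n f.
Proof. by case: f => [[A B] C] -> [eA eB eC]; congr (_, _, _, _); lia. Qed.

Lemma reduced_quad_of_form (n A B C : int) : 0 < n ->
  0 <= 2 * B -> 2 * B <= A -> A <= C -> reduced (quad_of_form n (A, B, C)).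
Proof. by move=> n_gt0 B_ge0 BA AC -[[|[|[|[|i]]]] //= _]; rewrite /absq; lia. Qed.

Lemma root_set_quad_of_form (m n : int) (f : bform) : 0 < n ->
  reduced_form_set (- 4 * n ^+ 2 + 4 * m) f -> root_set (4 * m) n (quad_of_form n f).
Proof.
case: f => [[A B] C] n_gt0 [/= discE B_ge0 BA AC].
split=> //=; [split=> //=; [exact: reduced_quad_of_form | lia ..] | lia | lia].
Qed.

Lemma form_of_root_set (m n : int) (v : quad) : root_set (4 * m) n v ->
  exists2 f, reduced_form_set (- 4 * n ^+ 2 + 4 * m) f & corr n v f.
Proof.
case: v => [[[w x] y] z] [[_ /andP[_ xy] yz _ [zwxy _]] _ QDE wE].
move: QDE; rewrite QD_reduce => QDE.
have [B twoB] : exists B, w + x + y - z = 2 * B.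
  apply: (@sqr_eq_mul4_even _ (m - w ^+ 2 + (x + w) * (y + w))).
  by rewrite mulrDr mulrBr -QDE; ring.
have discE : 4 * B ^+ 2 - 4 * (x - n) * (y - n) = - 4 * n ^+ 2 + 4 * m.
  by rewrite -QDE twoB wE; ring.
by exists (x - n, B, y - n); split; rewrite /disc; lia.
Qed.

Lemma quad_of_form_inj (n : int) : injective (quad_of_form n).
Proof.
by move=> [[A B] C] [[A' B'] C'] /= [eA eC eB]; congr (_, _, _); lia.
Qed.

Lemma reduced_form_bounds (D A B C : int) : D < 0 ->
  reduced_form_set D (A, B, C) -> [/\ 0 <= A <= - D, 0 <= B <= - D & 0 <= C <= - D].
Proof.
move=> D_lt0 [/= discE B_ge0 BA AC].
have A_gt0 : 0 < A by nia.
have AC_le : 3 * (A * C) <= - D by nia.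
have C_le : C <= A * C by nia.
by split; lia.
Qed.

Definition int_box (M : nat) : seq bform :=
  let r := [seq k%:Z | k <- iota 0 M.+1] in
  [seq (ab, c) | ab <- [seq (a, b) | a <- r, b <- r], c <- r].

Lemma mem_int_box (M : nat) (A B C : int) :
  0 <= A <= M%:Z -> 0 <= B <= M%:Z -> 0 <= C <= M%:Z -> (A, B, C) \in int_box M.
Proof.
have mem_r (a : int) : 0 <= a <= M%:Z -> a \in [seq k%:Z | k <- iota 0 M.+1].
  move=> /andP[a_ge0 aM]; have [k ak] : exists k : nat, a = k%:Z by exists `|a|%N; lia.
  by rewrite ak in aM *; apply: map_f; rewrite mem_iota; lia.
by move=> /mem_r rA /mem_r rB /mem_r rC; do 2?apply: allpairs_f.
Qed.

Definition reduced_formb (D : int) (f : bform) : bool :=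
  let: (A, B, C) := f in [&& disc f == D, 0 <= 2 * B, 2 * B <= A & A <= C].

Lemma reduced_formP (D : int) (f : bform) :
  reflect (reduced_form_set D f) (reduced_formb D f).
Proof.
by case: f => [[A B] C]; apply: (iffP and4P) => [[/eqP]|[->]]; split.
Qed.

Lemma reduced_forms_finite (D : int) : D < 0 -> exists N, has_card (reduced_form_set D) N.
Proof.
move=> D_lt0.
have box_p : {subset reduced_formb D <= int_box `|D|%N}.
  move=> [[A B] C] /reduced_formP /(reduced_form_bounds D_lt0) [hA hB hC].
  by apply: mem_int_box; lia.
by eexists; apply: has_card_filter_undup box_p; apply: reduced_formP.
Qed.

Theorem theorem4p1 (m n : int) (hn : 0 < n) :
  let D := - 4 * n ^+ 2 + 4 * m in
  ((forall v, root_set (4 * m) n v ->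
      exists! f, reduced_form_set D f /\ corr n v f) /\
   (forall f, reduced_form_set D f ->
      exists! v, root_set (4 * m) n v /\ corr n v f)) /\
  (D < 0 -> exists N : nat, Nroot_is (4 * m) n N /\ htilde_is (- 4 * (n ^+ 2 - m)) N).
Proof.
move=> D.
have root_eq v : root_set (4 * m) n v -> exists2 f, reduced_form_set D f & v = quad_of_form n f.
  move=> rv; have [f Df vf] := form_of_root_set rv; exists f => //.
  by case: v rv vf => [[[w x] y] z] [_ _ _ wE]; apply: corr_quad_uniq.
split; [split|].
- move=> v rv; have [f Df vf] := form_of_root_set rv.
  by exists f; split=> // f' [_ vf']; apply: corr_form_uniq vf vf'.
- move=> f Df; exists (quad_of_form n f).
  split; first by split; [apply: root_set_quad_of_form | apply: corr_quad_of_form].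
  move=> v [/root_eq [f' _ ->] vf].
  by rewrite (corr_form_uniq (corr_quad_of_form n f') vf).
- move=> D_lt0; have [N DN] := reduced_forms_finite D_lt0.
  have -> : - 4 * (n ^+ 2 - m) = D by rewrite /D; ring.
  exists N; split=> //; apply: has_card_image DN; first by apply: quad_of_form_inj.
  move=> v; split; first exact: root_eq.
  by case=> f Df ->; apply: root_set_quad_of_form.
Qed.
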